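(* The scheme $CD$ (described in the context) can be rewritten with the CG-like structure of the following scheme, called $CD$-red: Step 0: set $k=0$, $y_0\in\mathbb{R}^n$, $r_0:=b-Ay_0$. If $r_0=0$ stop; else set $p_0:=r_0$, $k=k+1$. Compute $a_0:=r_0^Tp_0/p_0^TAp_0$, $\gamma_0:=-a_0$, $y_1:=y_0+a_0p_0$, $r_1:=r_0-a_0Ap_0$. If $r_1=0$ stop; else set $\sigma_0:=\gamma_0\|Ap_0\|^2/p_0^TAp_0$, $\beta_0:=-(1+\sigma_0)$, $p_1:=r_1+\beta_0p_0$, $k=k+1$. Step $k$: compute $a_{k-1}:=r_{k-1}^Tp_{k-1}/p_{k-1}^TAp_{k-1}$, $y_k:=y_{k-1}+a_{k-1}p_{k-1}$, $r_k:=r_{k-1}-a_{k-1}Ap_{k-1}$. If $r_k=0$ stop; else compute $\gamma_{k-1}$ by the recursion below, set $\sigma_{k-1}:=\gamma_{k-1}\|Ap_{k-1}\|^2/p_{k-1}^TAp_{k-1}$, $\beta_{k-1}:=-(1+\sigma_{k-1})$, $p_k:=r_k+\beta_{k-1}p_{k-1}$, $k=k+1$, and repeat Step $k$, provided that the sequence $\{\gamma_k\}$ satisfies $\gamma_0:=-a_0$ and \[ \gamma_k := -\frac{\gamma_{k-1}^2\|Ap_{k-1}\|^2+\gamma_{k-1}\,p_{k-1}^TAp_{k-1}}{p_k^TAp_k},\qquad k\ge 1 . \] In particular, the positions $\gamma_i=-a_i$, $i\ge 0$, in $CD$ satisfy this recursion.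
   Context: Consider the linear system $Ay=b$ with $A\in\mathbb{R}^{n\times n}$ symmetric positive definite and $b\in\mathbb{R}^n$. The $CD$ class is the following iteration, with parameters $\gamma_k\in\mathbb{R}\setminus\{0\}$ for all $k\ge0$. Step 0: set $k=0$, $y_0\in\mathbb{R}^n$, $r_0:=b-Ay_0$, $\gamma_0\neq0$. If $r_0=0$ stop; else set $p_0:=r_0$, $k=k+1$; compute $a_0:=r_0^Tp_0/p_0^TAp_0$, $y_1:=y_0+a_0p_0$, $r_1:=r_0-a_0Ap_0$. If $r_1=0$ stop; else set $\sigma_0:=\gamma_0\|Ap_0\|^2/p_0^TAp_0$, $p_1:=\gamma_0Ap_0-\sigma_0p_0$, $k=k+1$. Step $k$: compute $a_{k-1}:=r_{k-1}^Tp_{k-1}/p_{k-1}^TAp_{k-1}$, $y_k:=y_{k-1}+a_{k-1}p_{k-1}$, $r_k:=r_{k-1}-a_{k-1}Ap_{k-1}$. If $r_k=0$ stop; else set $\sigma_{k-1}:=\gamma_{k-1}\|Ap_{k-1}\|^2/p_{k-1}^TAp_{k-1}$, $\omega_{k-1}:=\frac{\gamma_{k-1}}{\gamma_{k-2}}\frac{p_{k-1}^TAp_{k-1}}{p_{k-2}^TAp_{k-2}}$, $p_k:=\gamma_{k-1}Ap_{k-1}-\sigma_{k-1}p_{k-1}-\omega_{k-1}p_{k-2}$, $k=k+1$, and repeat Step $k$. *)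

From HB Require Import structures.
From mathcomp Require Import all_boot all_order all_algebra.
Set Implicit Arguments. Unset Strict Implicit. Unset Printing Implicit Defensive.
Import Order.TTheory GRing.Theory Num.Theory.
Local Open Scope ring_scope.

Section CDSchemes.
Variable R : realFieldType.
Variable n : nat.

Definition vdot (u v : 'cV[R]_n) : R := (u^T *m v) 0 0.

Definition spd (A : 'M[R]_n) : Prop :=
  A^T = A /\ forall x : 'cV[R]_n, x != 0 -> 0 < vdot x (A *m x).

(* ---------------- the CD class ----------------
   State at index k: (y_k, r_k, p_k, p_{k-1}); the transition k -> k+1 is
   "Step k+1" of the scheme (it uses gamma_k, sigma_k, omega_k).
   After the scheme would stop (r_k = 0) the values are meaningless; all
   statements only refer to indices reached before stopping. *)
Record cd_state := CDState {
  cd_y : 'cV[R]_n; cd_r : 'cV[R]_n; cd_p : 'cV[R]_n; cd_pp : 'cV[R]_n }.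

Fixpoint cd_iter (A : 'M[R]_n) (b y0 : 'cV[R]_n) (gamma : nat -> R) (k : nat)
  : cd_state :=
  match k with
  | 0 => let r0 := b - A *m y0 in CDState y0 r0 r0 0
  | k'.+1 =>
    let s := cd_iter A b y0 gamma k' in
    let p := cd_p s in
    let Ap := A *m p in
    let a := vdot (cd_r s) p / vdot p Ap in
    let sigma := gamma k' * vdot Ap Ap / vdot p Ap in
    let pnew :=
      if k' is k''.+1 then
        let pp := cd_pp s in
        let omega := (gamma k' / gamma k'') * (vdot p Ap / vdot pp (A *m pp)) in
        gamma k' *: Ap - sigma *: p - omega *: pp
      else gamma 0%N *: Ap - sigma *: p in
    CDState (cd_y s + a *: p) (cd_r s - a *: Ap) pnew p
  end.

Definition CD_y A b y0 gamma k := cd_y (cd_iter A b y0 gamma k).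
Definition CD_r A b y0 gamma k := cd_r (cd_iter A b y0 gamma k).
Definition CD_p A b y0 gamma k := cd_p (cd_iter A b y0 gamma k).
Definition CD_a A b y0 gamma k :=
  vdot (CD_r A b y0 gamma k) (CD_p A b y0 gamma k)
  / vdot (CD_p A b y0 gamma k) (A *m CD_p A b y0 gamma k).

(* ---------------- the CD-red scheme ----------------
   State at index k: (y_k, r_k, p_k, gamma_{k-1}, p_{k-1}). *)
Record red_state := RedState {
  rd_y : 'cV[R]_n; rd_r : 'cV[R]_n; rd_p : 'cV[R]_n; rd_g : R; rd_pp : 'cV[R]_n }.

Fixpoint red_iter (A : 'M[R]_n) (b y0 : 'cV[R]_n) (k : nat) : red_state :=
  match k with
  | 0 => let r0 := b - A *m y0 in RedState y0 r0 r0 0 0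
  | k'.+1 =>
    let s := red_iter A b y0 k' in
    let p := rd_p s in
    let Ap := A *m p in
    let a := vdot (rd_r s) p / vdot p Ap in
    let ynew := rd_y s + a *: p in
    let rnew := rd_r s - a *: Ap in
    let g :=
      if k' is _.+1 then
        let gp := rd_g s in
        let pp := rd_pp s in
        - ((gp ^+ 2 * vdot (A *m pp) (A *m pp) + gp * vdot pp (A *m pp))
           / vdot p Ap)
      else - a in
    let sigma := g * vdot Ap Ap / vdot p Ap in
    let beta := - (1 + sigma) in
    RedState ynew rnew (rnew + beta *: p) g p
  end.

Definition RED_y A b y0 k := rd_y (red_iter A b y0 k).
Definition RED_r A b y0 k := rd_r (red_iter A b y0 k).
Definition RED_p A b y0 k := rd_p (red_iter A b y0 k).

End CDSchemes.

(* With gamma_i = -a_i the residual update is r_{k+1} = r_k + gamma_k A p_k, and by induction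
   r_{k+1} = p_{k+1} + (1 + sigma_k) p_k, which is the CD-red update p_{k+1} = r_{k+1} + beta_k p_k.
   The induction step amounts to omega_{k+1} = -(1 + sigma_k). Since r_{k+1} is orthogonal to
   p_k and p_{k-1}, and p_{k+1} is A-conjugate to p_k,
     r_{k+1}^T p_{k+1} = gamma_k (1 + sigma_k) p_k^T A p_k = gamma_k^2 |A p_k|^2 + gamma_k p_k^T A p_k,
   so a_{k+1} = -gamma_{k+1} is exactly the gamma-recursion, and it yields that value of
   omega_{k+1}. *)
From HB Require Import structures.
From mathcomp Require Import all_boot all_order all_algebra.
From mathcomp Require Import ring.
Set Implicit Arguments. Unset Strict Implicit. Unset Printing Implicit Defensive.
Import Order.TTheory GRing.Theory Num.Theory.
Local Open Scope ring_scope.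

Section InnerProduct.
Variables (R : realFieldType) (n : nat).
Implicit Types (u v w : 'cV[R]_n) (c : R).

Lemma vdotE u v : vdot u v = \sum_i u i 0 * v i 0.
Proof. by rewrite /vdot mxE; apply: eq_bigr => j _; rewrite mxE. Qed.

Lemma vdotC u v : vdot u v = vdot v u.
Proof. by rewrite !vdotE; apply: eq_bigr => i _; rewrite mulrC. Qed.

Lemma vdotDr u v w : vdot u (v + w) = vdot u v + vdot u w.
Proof. by rewrite !vdotE -big_split; apply: eq_bigr => i _; rewrite mxE mulrDr. Qed.

Lemma vdotBr u v w : vdot u (v - w) = vdot u v - vdot u w.
Proof. by rewrite !vdotE -sumrB; apply: eq_bigr => i _; rewrite !mxE mulrBr. Qed.

Lemma vdotZr u v c : vdot u (c *: v) = c * vdot u v.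
Proof. by rewrite !vdotE mulr_sumr; apply: eq_bigr => i _; rewrite mxE mulrCA. Qed.

Lemma vdotDl u v w : vdot (v + w) u = vdot v u + vdot w u.
Proof. by rewrite vdotC vdotDr !(vdotC u). Qed.

Lemma vdotBl u v w : vdot (v - w) u = vdot v u - vdot w u.
Proof. by rewrite vdotC vdotBr !(vdotC u). Qed.

Lemma vdotZl u v c : vdot (c *: v) u = c * vdot v u.
Proof. by rewrite vdotC vdotZr !(vdotC u). Qed.

Lemma vdot0l u : vdot 0 u = 0.
Proof. by rewrite -(scale0r 0) vdotZl mul0r. Qed.

Lemma vdot_symmx (A : 'M[R]_n) u v : A^T = A -> vdot (A *m u) v = vdot u (A *m v).
Proof. by move=> symA; rewrite /vdot trmx_mul symA mulmxA. Qed.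

Lemma vdotvv_eq0 u : vdot u u = 0 -> u = 0.
Proof.
rewrite vdotE => /eqP; rewrite psumr_eq0 => [/allP u2_eq0|i _]; last first.
  by rewrite -expr2 sqr_ge0.
apply/matrixP => i j; rewrite (ord1 j) mxE.
by move: (u2_eq0 i (mem_index_enum _)); rewrite mulf_eq0 orbb => /eqP.
Qed.

End InnerProduct.

Section CDIteration.
Variables (R : realFieldType) (n : nat) (A : 'M[R]_n) (b y0 : 'cV[R]_n) (g : nat -> R).
Hypothesis symA : A^T = A.
Hypothesis posA : forall x : 'cV[R]_n, x != 0 -> 0 < vdot x (A *m x).
Hypothesis g_neq0 : forall k, g k != 0.

Local Notation y k := (CD_y A b y0 g k).
Local Notation r k := (CD_r A b y0 g k).
Local Notation p k := (CD_p A b y0 g k).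
Local Notation a k := (CD_a A b y0 g k).
Local Notation pAp k := (vdot (p k) (A *m p k)).
Local Notation ApAp k := (vdot (A *m p k) (A *m p k)).
Local Notation sigma k := (g k * ApAp k / pAp k).

(* p_{-1} := 0 and omega_0 := 0 make Step 1 of CD a special case of Step k. *)
Definition CD_pprev k := if k is j.+1 then p j else 0.
Definition CD_omega k := if k is j.+1 then g k / g j * (pAp k / pAp j) else 0.

Local Notation pprev k := (CD_pprev k).
Local Notation omega k := (CD_omega k).

Definition red_gamma k :=
  - ((g k.-1 ^+ 2 * ApAp k.-1 + g k.-1 * pAp k.-1) / pAp k).

Lemma CD_rS k : r k.+1 = r k - a k *: (A *m p k).
Proof. by []. Qed.

Lemma CD_pS k : p k.+1 = g k *: (A *m p k) - sigma k *: p k - omega k *: pprev k.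
Proof. by case: k => [|k] /=; rewrite ?scale0r ?subr0. Qed.

Lemma vdot_pS_l k u : vdot (p k.+1) u =
  g k * vdot (A *m p k) u - sigma k * vdot (p k) u - omega k * vdot (pprev k) u.
Proof. by rewrite CD_pS 2!vdotBl !vdotZl. Qed.

Lemma pAp_neq0 k : p k != 0 -> pAp k != 0.
Proof. by move/posA; rewrite lt0r => /andP[]. Qed.

Lemma vdot_rS_p k : pAp k != 0 -> vdot (r k.+1) (p k) = 0.
Proof. by move=> pAp_k; rewrite CD_rS vdotBl vdotZl vdot_symmx // divfK // subrr. Qed.

Lemma vdot_pS_Ap k : (forall j, (j <= k)%N -> pAp j != 0) ->
  vdot (p k.+1) (A *m p k) = 0.
Proof.
elim: k => [|k IHk] pAp_le; rewrite vdot_pS_l divfK ?pAp_le // subrr sub0r.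
  by rewrite vdot0l mulr0 oppr0.
rewrite /= -(vdot_symmx (p k) (p k.+1) symA) (vdotC (A *m p k)).
rewrite IHk ?mulr0 ?oppr0 // => j le_jk.
exact/pAp_le/leqW.
Qed.

Lemma vdot_rS_pprev k : (forall j, (j <= k)%N -> pAp j != 0) ->
  vdot (r k.+1) (pprev k) = 0.
Proof.
case: k => [|k] pAp_le; first by rewrite vdotC vdot0l.
rewrite CD_rS vdotBl vdotZl vdot_symmx // vdot_pS_Ap => [|j le_jk].
  by rewrite mulr0 subr0 vdot_rS_p ?pAp_le.
exact/pAp_le/leqW.
Qed.

Lemma CD_rS_decomp k : r k = p k - omega k *: pprev k -> a k = - g k ->
  r k.+1 = p k.+1 + (1 + sigma k) *: p k.
Proof.
move=> r_k a_k; rewrite CD_rS r_k a_k CD_pS.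
by apply/matrixP => i j; rewrite !mxE; ring.
Qed.

Lemma vdot_rS_pS k : (forall j, (j <= k)%N -> pAp j != 0) ->
  r k.+1 = p k.+1 + (1 + sigma k) *: p k ->
  vdot (r k.+1) (p k.+1) = g k ^+ 2 * ApAp k + g k * pAp k.
Proof.
move=> pAp_le r_kS.
have rAp : vdot (r k.+1) (A *m p k) = (1 + sigma k) * pAp k.
  by rewrite r_kS vdotDl vdot_pS_Ap // add0r vdotZl.
rewrite vdotC vdot_pS_l !(vdotC _ (r k.+1)) rAp vdot_rS_p ?vdot_rS_pprev ?pAp_le //.
by field; rewrite pAp_le.
Qed.

Lemma CD_omegaS k : pAp k != 0 -> pAp k.+1 != 0 -> a k.+1 = - g k.+1 ->
  vdot (r k.+1) (p k.+1) = g k ^+ 2 * ApAp k + g k * pAp k ->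
  omega k.+1 = - (1 + sigma k).
Proof.
move=> pAp_k pAp_kS; rewrite /CD_a => a_kS rp_kS.
have gpAp : g k.+1 * pAp k.+1 = - (g k ^+ 2 * ApAp k + g k * pAp k).
  by rewrite -rp_kS -[g k.+1]opprK -a_kS mulNr divfK.
rewrite /= mulf_div gpAp.
by field; rewrite pAp_k g_neq0.
Qed.

Lemma CD_pS_neq0 k : pAp k != 0 -> r k.+1 != 0 ->
  r k.+1 = p k.+1 + (1 + sigma k) *: p k -> p k.+1 != 0.
Proof.
move=> pAp_k r_kS_neq0 r_kS; apply: contraNneq r_kS_neq0 => p_kS_eq0.
apply/eqP/vdotvv_eq0.
by rewrite [X in vdot _ X]r_kS p_kS_eq0 add0r vdotZr vdot_rS_p // mulr0.
Qed.

Lemma CD_red_invariant k :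
  (forall j, (j <= k)%N -> r j != 0) -> (forall j, (j <= k)%N -> a j = - g j) ->
  (forall j, (j <= k)%N -> pAp j != 0) /\ r k.+1 = p k.+1 + (1 + sigma k) *: p k.
Proof.
elim: k => [|k IHk] r_le a_le.
  split; first by move=> j; rewrite leqn0 => /eqP ->; exact/pAp_neq0/(r_le 0).
  by apply: CD_rS_decomp; rewrite ?a_le //= scale0r subr0.
have r_le_k j (le_jk : (j <= k)%N) := r_le j (leqW le_jk).
have a_le_k j (le_jk : (j <= k)%N) := a_le j (leqW le_jk).
have [pAp_le r_kS] := IHk r_le_k a_le_k.
have pAp_kS : pAp k.+1 != 0.
  by apply/pAp_neq0/CD_pS_neq0 => //; [exact: pAp_le | exact: r_le].
have pAp_leS j : (j <= k.+1)%N -> pAp j != 0.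
  by rewrite leq_eqVlt ltnS => /orP[/eqP -> | /pAp_le].
split=> //; apply: CD_rS_decomp; last exact: a_le.
by rewrite (CD_omegaS (pAp_le k _)) ?a_le ?vdot_rS_pS // scaleNr opprK.
Qed.

Lemma CD_aS_red_gamma k :
  (forall j, (j <= k)%N -> r j != 0) -> (forall j, (j <= k)%N -> a j = - g j) ->
  - a k.+1 = red_gamma k.+1.
Proof.
move=> r_le a_le; have [pAp_le r_kS] := CD_red_invariant r_le a_le.
by rewrite /CD_a /red_gamma /= vdot_rS_pS // mulNr.
Qed.

Lemma CD_a_eq_opp_gamma :
  (r 0 != 0 -> g 0 = - a 0) ->
  (forall k, (0 < k)%N -> (forall j, (j <= k)%N -> r j != 0) -> g k = red_gamma k) ->
  forall k, (forall j, (j <= k)%N -> r j != 0) -> forall i, (i <= k)%N -> a i = - g i.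
Proof.
move=> g0 g_rec; elim=> [|k IHk] r_le i.
  by rewrite leqn0 => /eqP ->; rewrite g0 ?opprK ?r_le.
have r_le_k j (le_jk : (j <= k)%N) := r_le j (leqW le_jk).
rewrite leq_eqVlt ltnS => /orP[/eqP -> | /(IHk r_le_k) //].
by rewrite g_rec // -(CD_aS_red_gamma r_le_k (IHk r_le_k)) opprK.
Qed.

Lemma red_iter_CD k :
  (forall j, (j < k)%N -> r j != 0) -> (forall j, (j < k)%N -> a j = - g j) ->
  red_iter A b y0 k =
    RedState (y k) (r k) (p k) (if k is j.+1 then g j else 0) (pprev k).
Proof.
elim: k => [|k IHk] r_lt a_lt //=.
rewrite IHk /= => [|j /ltnW/r_lt|j /ltnW/a_lt] //.
have [_ r_kS] := CD_red_invariant r_lt a_lt.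
set g_red := match k with 0%N => _ | _.+1 => _ end.
suff -> : g_red = g k by rewrite -CD_rS r_kS scaleNr addrK.
case: k {IHk r_kS} r_lt a_lt @g_red => [|k] r_lt a_lt /=; first by rewrite -[g 0]opprK -a_lt.
have r_le_k j (le_jk : (j <= k)%N) := r_lt j (leqW le_jk).
have a_le_k j (le_jk : (j <= k)%N) := a_lt j (leqW le_jk).
by rewrite -/(red_gamma k.+1) -(CD_aS_red_gamma r_le_k a_le_k) a_lt ?opprK.
Qed.

End CDIteration.

Theorem lemma4 (R : realFieldType) (n : nat) (A : 'M[R]_n) (b y0 : 'cV[R]_n) :
  spd A ->
  (forall gamma : nat -> R,
     (forall k, gamma k != 0) ->
     (CD_r A b y0 gamma 0 != 0 -> gamma 0%N = - CD_a A b y0 gamma 0) ->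
     (forall k, (0 < k)%N ->
        (forall j, (j <= k)%N -> CD_r A b y0 gamma j != 0) ->
        gamma k =
          - ((gamma k.-1 ^+ 2
                * vdot (A *m CD_p A b y0 gamma k.-1) (A *m CD_p A b y0 gamma k.-1)
              + gamma k.-1
                * vdot (CD_p A b y0 gamma k.-1) (A *m CD_p A b y0 gamma k.-1))
             / vdot (CD_p A b y0 gamma k) (A *m CD_p A b y0 gamma k))) ->
     forall k, (forall j, (j < k)%N -> CD_r A b y0 gamma j != 0) ->
       CD_y A b y0 gamma k = RED_y A b y0 k /\
       CD_r A b y0 gamma k = RED_r A b y0 k /\
       (CD_r A b y0 gamma k != 0 -> CD_p A b y0 gamma k = RED_p A b y0 k))
  /\
  (forall gamma : nat -> R,
     (forall k, gamma k != 0) ->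
     (forall i, (forall j, (j <= i)%N -> CD_r A b y0 gamma j != 0) ->
        gamma i = - CD_a A b y0 gamma i) ->
     forall k, (0 < k)%N ->
       (forall j, (j <= k)%N -> CD_r A b y0 gamma j != 0) ->
       gamma k =
         - ((gamma k.-1 ^+ 2
               * vdot (A *m CD_p A b y0 gamma k.-1) (A *m CD_p A b y0 gamma k.-1)
             + gamma k.-1
               * vdot (CD_p A b y0 gamma k.-1) (A *m CD_p A b y0 gamma k.-1))
            / vdot (CD_p A b y0 gamma k) (A *m CD_p A b y0 gamma k))).
Proof.
move=> [symA posA]; split=> [g g_neq0 g0 g_rec k r_lt | g g_neq0 g_a [//|k] _ r_le].
  have a_lt j : (j < k)%N -> CD_a A b y0 g j = - g j.
    move=> lt_jk; apply: (CD_a_eq_opp_gamma symA posA g_neq0 g0 g_rec _ (leqnn j)) => i le_ij.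
    exact/r_lt/(leq_ltn_trans le_ij).
  rewrite /RED_y /RED_r /RED_p (red_iter_CD symA posA g_neq0 r_lt a_lt) /=.
  by split; [|split].
have r_le_k j (le_jk : (j <= k)%N) := r_le j (leqW le_jk).
have a_le j : (j <= k)%N -> CD_a A b y0 g j = - g j.
  by move=> le_jk; rewrite g_a ?opprK // => i le_ij; apply/r_le_k/(leq_trans le_ij).
rewrite g_a //; exact: (CD_aS_red_gamma symA posA g_neq0 r_le_k a_le).
Qed.
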